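(* Let $n\in\mathbb{N}$ and $\lambda=0$. The solution of the system $(B)$ starting at $\phi(1,0)$ (i.e. the trajectory in the variables $(\mathcal{L},X_1,X_2,Y_1,Y_2)$ obtained from the solution corresponding to $(\alpha,\beta)=(1,0)$) exists for all large $s$, the functions $\mathcal{L},X_1,X_2,Y_1,Y_2$ all have real limits as $s\to\infty$, and $\lim_{s\to\infty}\mathcal{L}(s)>0$, $\lim_{s\to\infty}X_1(s)=\lim_{s\to\infty}X_2(s)=\lim_{s\to\infty}Y_1(s)=0$, $\lim_{s\to\infty}Y_2(s)>0$.
   Context: Fix $n\in\mathbb{N}$, $\lambda=0$. The $U(2)$-invariant soliton system for $(\xi,L_1,L_2,R_1,R_2)$ as functions of $r$ is: $\xi'=-L_1^2-2L_2^2-\lambda$, $L_1'=-\xi L_1+\frac{R_1^2}{2}-\lambda$, $L_2'=-\xi L_2+R_1R_2-\frac{R_1^2}{2}-\lambda$, $R_1'=R_1(L_1-2L_2)$, $R_2'=-R_2L_1$. Standing fact (standard short-time existence): there are $T>0$ and a continuous $\phi:\mathbb{S}^1\to(1,\infty)\times\mathbb{R}^6$ such that for each $(\alpha,\beta)\in\mathbb{S}^1$ there is a solution of this system on $(0,T]$ (regarded as a solution of the full system with $L_3=L_2$, $R_3=R_2$) with data $\phi(\alpha,\beta)=(\xi,L_1,L_2,L_2,R_1,R_2,R_2)(T)$, satisfying $\alpha=\lim_{r\to0}\frac{\xi-L_1-2L_2}{r}$, $\beta=\lim_{r\to0}\frac{R_1}{r}$; if $\alpha=0$ then $\xi=L_1+2L_2$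 and $L_1^2+2L_2^2+2R_1R_2-\frac{R_1^2}{2}-(L_1+2L_2)^2=2\lambda$; if $\beta=0$ then $R_1\equiv0$; if $\beta>0$ then $f_1=1/R_2$, $f_2=f_3=(R_1R_2)^{-1/2}$, $u'=L_1+2L_2-\xi$ give a steady gradient Ricci soliton metric $dr^2+f_1^2\omega_1^2+f_2^2(\omega_2^2+\omega_3^2)$ ($\omega_i$ dual to $u_i/2$) extending smoothly over the singular orbit $\mathbb{S}^2$ of $M=SU(2)\times_{U(1)}\mathbb{R}^2$. This is called the solution corresponding to $(\alpha,\beta)$. Change of variables: where $\xi>0$ set $\mathcal{L}=1/\xi$, $X_i=\mathcal{L}L_i$, $Y_i=\mathcal{L}R_i$, and reparametrise by $s$ with $dr/ds=\mathcal{L}(r(s))$, $r(0)=T$. Then the system $(B)$ holds: $\frac{d\mathcal{L}}{ds}=\mathcal{L}(X_1^2+2X_2^2+\lambda\mathcal{L}^2)$, $\frac{dX_1}{ds}=\frac{Y_1^2}{2}-X_1-\lambda\mathcal{L}^2+X_1(X_1^2+2X_2^2+\lambda\mathcal{L}^2)$, $\frac{dX_2}{ds}=Y_1Y_2-\frac{Y_1^2}{2}-X_2-\lambda\mathcal{L}^2+X_2(X_1^2+2X_2^2+\lambda\mathcal{L}^2)$, $\frac{dY_1}{ds}=Y_1(X_1-2X_2+X_1^2+2X_2^2+\lambda\mathcal{L}^2)$, $\frac{dY_2}{ds}=Y_2(-X_1+X_1^2+2X_2^2+\lambda\mathcal{L}^2)$. ''The solution of $(B)$ starting at $\phi(\alpha,\beta)$''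 is the maximal solution of $(B)$ with the initial data at $s=0$ obtained from $\phi(\alpha,\beta)$ by this change of variables. *)

From Stdlib Require Import Reals.
From Coquelicot Require Import Coquelicot.
Open Scope R_scope.

(* The U(2)-invariant soliton system in r (with L3 = L2, R3 = R2), at a point r. *)
Definition rsys_at (lam : R) (xi L1 L2 R1 R2 : R -> R) (r : R) : Prop :=
  is_derive xi r (- (L1 r)^2 - 2 * (L2 r)^2 - lam) /\
  is_derive L1 r (- xi r * L1 r + (R1 r)^2 / 2 - lam) /\
  is_derive L2 r (- xi r * L2 r + R1 r * R2 r - (R1 r)^2 / 2 - lam) /\
  is_derive R1 r (R1 r * (L1 r - 2 * L2 r)) /\
  is_derive R2 r (- R2 r * L1 r).

Definition Bq (lam : R) (Lc X1 X2 : R -> R) (s : R) : R :=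
  (X1 s)^2 + 2 * (X2 s)^2 + lam * (Lc s)^2.

Definition Bsys_at (lam : R) (Lc X1 X2 Y1 Y2 : R -> R) (s : R) : Prop :=
  let q := Bq lam Lc X1 X2 s in
  is_derive Lc s (Lc s * q) /\
  is_derive X1 s ((Y1 s)^2 / 2 - X1 s - lam * (Lc s)^2 + X1 s * q) /\
  is_derive X2 s (Y1 s * Y2 s - (Y1 s)^2 / 2 - X2 s - lam * (Lc s)^2 + X2 s * q) /\
  is_derive Y1 s (Y1 s * (X1 s - 2 * X2 s + q)) /\
  is_derive Y2 s (Y2 s * (- X1 s + q)).

Definition Bsol_on (lam : R) (S : Rbar) (Lc X1 X2 Y1 Y2 : R -> R) : Prop :=
  Rbar_lt 0 S /\
  (forall s, 0 < s -> Rbar_lt s S -> Bsys_at lam Lc X1 X2 Y1 Y2 s) /\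
  filterlim Lc (at_right 0) (locally (Lc 0)) /\
  filterlim X1 (at_right 0) (locally (X1 0)) /\
  filterlim X2 (at_right 0) (locally (X2 0)) /\
  filterlim Y1 (at_right 0) (locally (Y1 0)) /\
  filterlim Y2 (at_right 0) (locally (Y2 0)).

(* Initial data at s = 0 obtained from the data (xi,L1,L2,R1,R2)(T) by the
   change of variables L = 1/xi, X_i = L L_i, Y_i = L R_i. *)
Definition B_init (xiT L1T L2T R1T R2T : R) (Lc X1 X2 Y1 Y2 : R -> R) : Prop :=
  Lc 0 = / xiT /\ X1 0 = L1T / xiT /\ X2 0 = L2T / xiT /\
  Y1 0 = R1T / xiT /\ Y2 0 = R2T / xiT.

From Stdlib Require Import Reals Lra Psatz.
From Coquelicot Require Import Coquelicot.
Open Scope R_scope.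

(* For beta = 0 we have R1 = 0, so (L2^2)' = -2 xi L2^2 <= 0 and L2 -> 0 at r = 0
   force L2 = 0; then xi^2 - L1^2 is constant, and alpha = 1 together with
   r L1 -> 1 shows that the constant is 2.  Hence the data of (B) are
   (1/xi, a, 0, 0, R2/xi)(T) with a = L1/xi and a^2 = 1 - 2/xi^2 < 1.  On the
   invariant set Y1 = X2 = 0 system (B) is solved in closed form, and a Gronwall
   argument on bounded time intervals shows that every solution with these data
   is the closed-form one; its limits as s -> oo are read off directly. *)

Lemma filterlim_Rplus {T} {F : (T -> Prop) -> Prop} {FF : Filter F} (f g : T -> R) a b c :
  filterlim f F (locally a) -> filterlim g F (locally b) -> c = a + b ->
  filterlim (fun x => f x + g x) F (locally c).
Proof.
  intros Hf Hg ->.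
  exact (filterlim_comp_2 f g Rplus Hf Hg (filterlim_plus (V := R_NormedModule) a b)).
Qed.

Lemma filterlim_Rminus {T} {F : (T -> Prop) -> Prop} {FF : Filter F} (f g : T -> R) a b c :
  filterlim f F (locally a) -> filterlim g F (locally b) -> c = a - b ->
  filterlim (fun x => f x - g x) F (locally c).
Proof.
  intros Hf Hg ->. apply filterlim_Rplus with a (- b); [exact Hf | | reflexivity].
  exact (filterlim_comp _ _ _ g Ropp F _ _ Hg (filterlim_opp (V := R_NormedModule) b)).
Qed.

Lemma filterlim_Rmult {T} {F : (T -> Prop) -> Prop} {FF : Filter F} (f g : T -> R) a b c :
  filterlim f F (locally a) -> filterlim g F (locally b) -> c = a * b ->
  filterlim (fun x => f x * g x) F (locally c).
Proof.
  intros Hf Hg ->.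
  exact (filterlim_comp_2 f g Rmult Hf Hg (filterlim_mult (K := R_AbsRing) a b)).
Qed.

Lemma is_derive_Rmult (f g : R -> R) (x df dg : R) :
  is_derive f x df -> is_derive g x dg ->
  is_derive (fun t => f t * g t) x (df * g x + f x * dg).
Proof. intros Hf Hg. apply (is_derive_mult (K := R_AbsRing)); auto using Rmult_comm. Qed.

Lemma is_derive_Rminus (f g : R -> R) (x df dg : R) :
  is_derive f x df -> is_derive g x dg -> is_derive (fun t => f t - g t) x (df - dg).
Proof. intros Hf Hg. apply (is_derive_minus (V := R_NormedModule)); auto. Qed.

Lemma is_derive_eq_val (f : R -> R) (x l l' : R) : is_derive f x l -> l = l' -> is_derive f x l'.
Proof. intros H <-; exact H. Qed.

Lemma at_right_of_interval (x b : R) (P : R -> Prop) :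
  x < b -> (forall y, x < y < b -> P y) -> at_right x P.
Proof.
  intros Hxb HP. exists (mkposreal _ (proj2 (Rlt_0_minus _ _) Hxb)). intros y Hy Hxy.
  change (Rabs (y - x) < b - x) in Hy. apply Rabs_def2 in Hy. apply HP. lra.
Qed.

Lemma at_left_of_interval (a x : R) (P : R -> Prop) :
  a < x -> (forall y, a < y < x -> P y) -> at_left x P.
Proof.
  intros Hax HP. exists (mkposreal _ (proj2 (Rlt_0_minus _ _) Hax)). intros y Hy Hyx.
  change (Rabs (y - x) < x - a) in Hy. apply Rabs_def2 in Hy. apply HP. lra.
Qed.

Lemma filterlim_at_right_id (x : R) : filterlim (fun t => t) (at_right x) (locally x).
Proof. intros P [d Hd]. exists d. intros y Hy _. exact (Hd y Hy). Qed.

Lemma is_derive_filterlim_at_right (f : R -> R) (x l : R) :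
  is_derive f x l -> filterlim f (at_right x) (locally (f x)).
Proof.
  intros Hf P HP.
  destruct (ex_derive_continuous f x (ex_intro _ l Hf) P HP) as [d Hd].
  exists d. intros y Hy _. exact (Hd y Hy).
Qed.

Lemma derive_nonpos_nonincreasing (f df : R -> R) (a b : R) :
  (forall x, a < x < b -> is_derive f x (df x)) -> (forall x, a < x < b -> df x <= 0) ->
  forall x y, a < x -> x <= y -> y < b -> f y <= f x.
Proof.
  intros Hf Hdf x y Hx Hxy Hy.
  destruct (MVT_gen f x y df) as [c [Hc Hmvt]]; cbv zeta in *;
    rewrite Rmin_left, Rmax_right in * by exact Hxy.
  - intros z Hz. apply Hf. lra.
  - intros z Hz. apply continuity_pt_filterlim, (ex_derive_continuous f z).
    exists (df z). apply Hf. lra.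
  - assert (df c <= 0) by (apply Hdf; lra). nra.
Qed.

Lemma derive_zero_const (f : R -> R) (a b : R) :
  (forall x, a < x < b -> is_derive f x 0) -> forall x y, a < x < b -> a < y < b -> f x = f y.
Proof.
  intros Hf.
  assert (Hdec : forall x y, a < x -> x <= y -> y < b -> f y <= f x).
  { apply (derive_nonpos_nonincreasing f (fun _ => 0)); [exact Hf | intros; lra]. }
  assert (Hinc : forall x y, a < x -> x <= y -> y < b -> - f y <= - f x).
  { apply (derive_nonpos_nonincreasing (fun t => - f t) (fun _ => - 0)); [|intros; lra].
    intros t Ht. apply (is_derive_opp (V := R_NormedModule)), Hf, Ht. }
  intros x y Hx Hy. destruct (Rle_or_lt x y).
  - pose proof (Hdec x y). pose proof (Hinc x y). lra.
  - pose proof (Hdec y x). pose proof (Hinc y x). lra.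
Qed.

Lemma linear_ode_zero (f g : R -> R) (b M : R) :
  (forall x, 0 < x < b -> is_derive f x (g x * f x)) ->
  (forall x, 0 < x < b -> g x <= M) ->
  filterlim f (at_right 0) (locally 0) ->
  forall x, 0 < x < b -> f x = 0.
Proof.
  intros Hf Hg Hf0 x Hx.
  (* Gronwall: [f^2 e^(-2 M t)] is nonincreasing, nonnegative and tends to 0 at 0. *)
  set (w := fun t => exp (- (2 * M * t))).
  assert (Hw : forall t, is_derive w t (- (2 * M) * w t)).
  { intros t. unfold w. auto_derive; [exact I | ring]. }
  set (k := fun t => f t * f t * w t).
  assert (Hk_dec : forall u v, 0 < u -> u <= v -> v < b -> k v <= k u).
  { apply (derive_nonpos_nonincreasing k (fun t => 2 * (g t - M) * k t)).
    - intros t Ht. eapply is_derive_eq_val.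
      + apply is_derive_Rmult; [apply is_derive_Rmult; apply Hf, Ht | apply Hw].
      + unfold k. ring.
    - intros t Ht. pose proof (Hg t Ht).
      assert (0 <= k t) by (apply Rmult_le_pos; [nra | left; apply exp_pos]). nra. }
  assert (Hk0 : filterlim k (at_right 0) (locally 0)).
  { apply filterlim_Rmult with 0 (w 0); [ | eapply is_derive_filterlim_at_right, Hw | ring].
    apply filterlim_Rmult with 0 0; [exact Hf0 | exact Hf0 | ring]. }
  assert (Hkx : k x <= 0).
  { apply (closed_filterlim_loc k (fun u => k x <= u) 0 Hk0); [|apply closed_ge].
    apply at_right_of_interval with x; [lra|]. intros y Hy. apply Hk_dec; lra. }
  assert (Hff : f x * f x * w x <= 0 * w x) by (unfold k in Hkx; lra).
  apply Rmult_le_reg_r in Hff; [nra | apply exp_pos].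
Qed.

Lemma bounded_of_continuous_Ioc (f : R -> R) (b : R) :
  0 < b -> (forall x, 0 < x <= b -> continuous f x) ->
  filterlim f (at_right 0) (locally (f 0)) ->
  exists M, forall x, 0 < x < b -> Rabs (f x) <= M.
Proof.
  intros Hb Hc Hf0.
  destruct (proj1 (filterlim_locally f (f 0)) Hf0 (mkposreal 1 Rlt_0_1)) as [d Hd].
  set (e := Rmin (d / 2) b).
  assert (He : 0 < e) by (unfold e; apply Rmin_glb_lt; pose proof (cond_pos d); lra).
  assert (He_d : e < d) by (unfold e; pose proof (Rmin_l (d / 2) b); pose proof (cond_pos d); lra).
  destruct (bounded_continuity f e b) as [M HM].
  { intros x Hx. apply Hc. lra. }
  exists (Rmax (Rabs (f 0) + 1) M). intros x Hx. destruct (Rlt_or_le x e).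
  - assert (Hx1 : Rabs (f x - f 0) < 1).
    { apply (Hd x); [|lra]. change (Rabs (x - 0) < d). rewrite Rminus_0_r, Rabs_pos_eq; lra. }
    pose proof (Rabs_triang_inv (f x) (f 0)). pose proof (Rmax_l (Rabs (f 0) + 1) M). lra.
  - assert (HMx : Rabs (f x) < M) by exact (HM x ltac:(lra)).
    pose proof (Rmax_r (Rabs (f 0) + 1) M). lra.
Qed.

Section RSystemWithR1Zero.

Variables (T : R) (xi L1 L2 R1 R2 : R -> R).
Hypothesis HT : 0 < T.
Hypothesis Hsys : forall r, 0 < r < T -> rsys_at 0 xi L1 L2 R1 R2 r.
Hypothesis HR1 : forall r, 0 < r < T -> R1 r = 0.
Hypothesis Hxi_T : filterlim xi (at_left T) (locally (xi T)).
Hypothesis HL1_T : filterlim L1 (at_left T) (locally (L1 T)).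
Hypothesis HL2_T : filterlim L2 (at_left T) (locally (L2 T)).
Hypothesis Hxi_T_pos : 0 < xi T.
Hypothesis HL2_0 : filterlim L2 (at_right 0) (locally 0).
Hypothesis Halpha : filterlim (fun r => (xi r - L1 r - 2 * L2 r) / r) (at_right 0) (locally 1).
Hypothesis HL1_0 : filterlim (fun r => r * L1 r) (at_right 0) (locally 1).

Lemma xi_pos r : 0 < r < T -> 0 < xi r.
Proof.
  intros Hr.
  assert (xi T <= xi r).
  { apply (closed_filterlim_loc xi (fun u => u <= xi r) (xi T) Hxi_T); [|apply closed_le].
    apply at_left_of_interval with r; [lra|]. intros y Hy.
    apply (derive_nonpos_nonincreasing xi (fun t => - L1 t ^ 2 - 2 * L2 t ^ 2 - 0) 0 T);
      try lra.
    - intros t Ht. apply (Hsys t Ht).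
    - intros t Ht. nra. }
  lra.
Qed.

Lemma L2_eq0 r : 0 < r < T -> L2 r = 0.
Proof.
  intros Hr.
  assert (Hdec : forall u v, 0 < u -> u <= v -> v < T -> L2 v * L2 v <= L2 u * L2 u).
  { apply (derive_nonpos_nonincreasing (fun t => L2 t * L2 t) (fun t => -2 * xi t * (L2 t * L2 t))).
    - intros t Ht. destruct (Hsys t Ht) as (_ & _ & HL2 & _).
      eapply is_derive_eq_val; [apply is_derive_Rmult; apply HL2|].
      rewrite HR1 by exact Ht. field.
    - intros t Ht. assert (0 <= xi t * (L2 t * L2 t)).
      { apply Rmult_le_pos; [left; apply xi_pos, Ht | apply Rle_0_sqr]. }
      lra. }
  assert (L2 r * L2 r <= 0).
  { apply (closed_filterlim_loc (F := at_right 0) (fun t => L2 t * L2 t) (fun u => L2 r * L2 r <= u) 0);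
      [ | | apply closed_ge].
    - apply filterlim_Rmult with 0 0; [exact HL2_0 | exact HL2_0 | ring].
    - apply at_right_of_interval with r; [lra|]. intros y Hy. apply Hdec; lra. }
  apply Rsqr_0_uniq, Rle_antisym; [assumption | apply Rle_0_sqr].
Qed.

Lemma L2_T_eq0 : L2 T = 0.
Proof.
  apply (filterlim_locally_unique (F := at_left T) L2); [exact HL2_T|].
  apply (filterlim_ext_loc (fun _ => 0)); [|apply filterlim_const].
  apply at_left_of_interval with 0; [exact HT|]. intros y Hy. symmetry. apply L2_eq0, Hy.
Qed.

Lemma xi_sqr_sub_L1_sqr r : 0 < r < T -> xi r ^ 2 - L1 r ^ 2 = 2.
Proof.
  intros Hr. set (C := fun t => xi t ^ 2 - L1 t ^ 2).
  assert (Hconst : forall t, 0 < t < T -> C t = C r).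
  { intros t Ht. apply (derive_zero_const C 0 T); auto.
    intros u Hu. destruct (Hsys u Hu) as (Hxi & HL1 & _).
    eapply is_derive_eq_val; [apply is_derive_Rminus; apply is_derive_pow; [apply Hxi | apply HL1]|].
    rewrite HR1, L2_eq0 by exact Hu. simpl. field. }
  (* Once L2 = 0, xi^2 - L1^2 = q (r^2 q + 2 r L1) with q = (xi - L1) / r -> 1. *)
  assert (HC0 : filterlim C (at_right 0) (locally 2)).
  { apply (filterlim_ext_loc
      (fun t => (xi t - L1 t - 2 * L2 t) / t * (t * t * ((xi t - L1 t - 2 * L2 t) / t) + 2 * (t * L1 t)))).
    - apply at_right_of_interval with T; [exact HT|]. intros t Ht.
      unfold C. rewrite L2_eq0 by exact Ht. field. lra.
    - apply filterlim_Rmult with 1 2; [exact Halpha | | ring].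
      apply filterlim_Rplus with 0 2; [ | | ring].
      + apply filterlim_Rmult with 0 1; [ | exact Halpha | ring].
        apply filterlim_Rmult with 0 0; [apply filterlim_at_right_id.. | ring].
      + apply filterlim_Rmult with 2 1; [apply filterlim_const | exact HL1_0 | ring]. }
  apply (filterlim_locally_unique (F := at_right 0) C); [|exact HC0].
  apply (filterlim_ext_loc (fun _ => C r)); [|apply filterlim_const].
  apply at_right_of_interval with T; [exact HT|]. intros t Ht. symmetry. apply Hconst, Ht.
Qed.

Lemma xi_sqr_sub_L1_sqr_T : xi T ^ 2 - L1 T ^ 2 = 2.
Proof.
  enough (H : xi T * xi T - L1 T * L1 T = 2) by nra.
  apply (filterlim_locally_unique (F := at_left T) (fun t => xi t * xi t - L1 t * L1 t)).
  - apply filterlim_Rminus with (xi T * xi T) (L1 T * L1 T); [ | | reflexivity].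
    + apply filterlim_Rmult with (xi T) (xi T); [exact Hxi_T | exact Hxi_T | reflexivity].
    + apply filterlim_Rmult with (L1 T) (L1 T); [exact HL1_T | exact HL1_T | reflexivity].
  - apply (filterlim_ext_loc (fun _ => 2)); [|apply filterlim_const].
    apply at_left_of_interval with 0; [exact HT|]. intros t Ht.
    pose proof (xi_sqr_sub_L1_sqr t Ht). nra.
Qed.

End RSystemWithR1Zero.

(* For lam = 0 and Y1 = X2 = 0, system (B) reduces to the Bernoulli equation
   X1' = X1 (X1^2 - 1), to L' = L X1^2, and to Y2' = Y2 (X1^2 - X1), whose
   solution is proportional to 1 + X1 since (1 + X1)' = (1 + X1) (X1^2 - X1). *)
Definition sol_den (a s : R) := 1 - a ^ 2 + a ^ 2 * exp (- s) ^ 2.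
Definition X1sol (a s : R) := a * exp (- s) / sqrt (sol_den a s).
Definition Lsol (a l0 s : R) := l0 / sqrt (sol_den a s).
Definition Y2sol (a y0 s : R) := y0 * (1 + X1sol a s) / (1 + a).

Section ExplicitSolution.

Variable a : R.
Hypothesis Ha : a ^ 2 < 1.

Lemma sol_den_pos s : 0 < sol_den a s.
Proof. unfold sol_den. pose proof (exp_pos (- s)). nra. Qed.

Lemma is_derive_X1sol s : is_derive (X1sol a) s (X1sol a s * (X1sol a s ^ 2 - 1)).
Proof.
  pose proof (sol_den_pos s) as HD. pose proof (sqrt_lt_R0 _ HD).
  unfold X1sol, sol_den in *. auto_derive;
    change (a * (a * 1)) with (a ^ 2); change (exp (- s) * (exp (- s) * 1)) with (exp (- s) ^ 2).
  - repeat split; lra.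
  - field. lra.
Qed.

Lemma is_derive_Lsol l0 s : is_derive (Lsol a l0) s (Lsol a l0 s * X1sol a s ^ 2).
Proof.
  pose proof (sol_den_pos s) as HD. pose proof (sqrt_lt_R0 _ HD).
  unfold Lsol, X1sol, sol_den in *. auto_derive;
    change (a * (a * 1)) with (a ^ 2); change (exp (- s) * (exp (- s) * 1)) with (exp (- s) ^ 2).
  - repeat split; lra.
  - field. lra.
Qed.

Lemma is_derive_Y2sol y0 s :
  is_derive (Y2sol a y0) s (Y2sol a y0 s * (X1sol a s ^ 2 - X1sol a s)).
Proof.
  assert (1 + a <> 0) by nra.
  unfold Y2sol. auto_derive.
  - eexists. apply is_derive_X1sol.
  - replace (Derive (fun x => X1sol a x) s) with (X1sol a s * (X1sol a s ^ 2 - 1))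
      by (symmetry; apply is_derive_unique, is_derive_X1sol).
    field. lra.
Qed.

Lemma X1sol_sqr_lt_1 s : X1sol a s ^ 2 < 1.
Proof.
  pose proof (sol_den_pos s) as HD.
  assert (Hsq : sqrt (sol_den a s) * sqrt (sol_den a s) = sol_den a s) by (apply sqrt_sqrt; lra).
  pose proof (sqrt_lt_R0 _ HD).
  assert (HX : X1sol a s ^ 2 * sol_den a s = a ^ 2 * exp (- s) ^ 2).
  { unfold X1sol. rewrite <- Hsq at 2. field. lra. }
  unfold sol_den in HD, HX. pose proof (pow2_ge_0 (X1sol a s)). nra.
Qed.

Lemma sol_den_0 : sol_den a 0 = 1.
Proof. unfold sol_den. rewrite Ropp_0, exp_0. ring. Qed.

Lemma X1sol_0 : X1sol a 0 = a.
Proof. unfold X1sol. rewrite sol_den_0, sqrt_1, Ropp_0, exp_0. field. Qed.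

Lemma Lsol_0 l0 : Lsol a l0 0 = l0.
Proof. unfold Lsol. rewrite sol_den_0, sqrt_1. field. Qed.

Lemma Y2sol_0 y0 : Y2sol a y0 0 = y0.
Proof. unfold Y2sol. rewrite X1sol_0. field. nra. Qed.

Lemma Bsys_explicit l0 y0 s :
  Bsys_at 0 (Lsol a l0) (X1sol a) (fun _ => 0) (fun _ => 0) (Y2sol a y0) s.
Proof.
  unfold Bsys_at, Bq. split; [| split; [| split; [| split]]].
  - eapply is_derive_eq_val; [apply is_derive_Lsol | ring].
  - eapply is_derive_eq_val; [apply is_derive_X1sol | field].
  - auto_derive; [exact I | field].
  - auto_derive; [exact I | field].
  - eapply is_derive_eq_val; [apply is_derive_Y2sol | ring].
Qed.

Lemma Bsol_explicit l0 y0 :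
  Bsol_on 0 p_infty (Lsol a l0) (X1sol a) (fun _ => 0) (fun _ => 0) (Y2sol a y0).
Proof.
  split; [exact I |]. split; [intros s _ _; apply Bsys_explicit |].
  repeat split; try apply filterlim_const.
  - eapply is_derive_filterlim_at_right, is_derive_Lsol.
  - eapply is_derive_filterlim_at_right, is_derive_X1sol.
  - eapply is_derive_filterlim_at_right, is_derive_Y2sol.
Qed.

Lemma filterlim_exp_opp_comp (G : R -> R) :
  continuous G 0 -> filterlim (fun s => G (exp (- s))) (Rbar_locally p_infty) (locally (G 0)).
Proof.
  intros HG. apply (filterlim_comp _ _ _ (fun s => exp (- s)) G _ (locally 0)); [|exact HG].
  apply (filterlim_comp _ _ _ Ropp exp _ (Rbar_locally m_infty)).
  - apply (is_lim_opp (fun s => s) p_infty p_infty), is_lim_id.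
  - exact is_lim_exp_m.
Qed.

Lemma X1sol_lim : filterlim (X1sol a) (Rbar_locally p_infty) (locally 0).
Proof.
  set (G := fun t => a * t / sqrt (1 - a ^ 2 + a ^ 2 * t ^ 2)).
  replace 0 with (G 0) by (unfold G; field; apply Rgt_not_eq, sqrt_lt_R0; nra).
  apply (filterlim_exp_opp_comp G), (ex_derive_continuous G).
  unfold G. auto_derive. change (a * (a * 1)) with (a ^ 2).
  repeat split; [lra | apply Rgt_not_eq, sqrt_lt_R0; lra].
Qed.

Lemma Lsol_lim l0 :
  filterlim (Lsol a l0) (Rbar_locally p_infty) (locally (l0 / sqrt (1 - a ^ 2))).
Proof.
  set (G := fun t => l0 / sqrt (1 - a ^ 2 + a ^ 2 * t ^ 2)).
  replace (l0 / sqrt (1 - a ^ 2)) with (G 0) by (unfold G; do 2 f_equal; ring).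
  apply (filterlim_exp_opp_comp G), (ex_derive_continuous G).
  unfold G. auto_derive. change (a * (a * 1)) with (a ^ 2).
  repeat split; [lra | apply Rgt_not_eq, sqrt_lt_R0; lra].
Qed.

Lemma Y2sol_lim y0 : filterlim (Y2sol a y0) (Rbar_locally p_infty) (locally (y0 / (1 + a))).
Proof.
  apply (filterlim_comp _ _ _ (X1sol a) (fun u => y0 * (1 + u) / (1 + a)) _ (locally 0)).
  - exact X1sol_lim.
  - assert (E : y0 * (1 + 0) / (1 + a) = y0 / (1 + a)) by (field; nra). rewrite <- E.
    apply (ex_derive_continuous (fun u => y0 * (1 + u) / (1 + a))). auto_derive. nra.
Qed.

End ExplicitSolution.

Section ExplicitSolutionUnique.

Variables (a l0 y0 b M1 M2 : R) (Lc X1 X2 Y1 Y2 : R -> R).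
Hypothesis Ha : a ^ 2 < 1.
Hypothesis Hsys : forall s, 0 < s < b -> Bsys_at 0 Lc X1 X2 Y1 Y2 s.
Hypothesis HLc0 : filterlim Lc (at_right 0) (locally l0).
Hypothesis HX1_0 : filterlim X1 (at_right 0) (locally a).
Hypothesis HX2_0 : filterlim X2 (at_right 0) (locally 0).
Hypothesis HY1_0 : filterlim Y1 (at_right 0) (locally 0).
Hypothesis HY2_0 : filterlim Y2 (at_right 0) (locally y0).
Hypothesis HM1 : forall s, 0 < s < b -> Rabs (X1 s) <= M1.
Hypothesis HM2 : forall s, 0 < s < b -> Rabs (X2 s) <= M2.

Lemma Y1_eq0 s : 0 < s < b -> Y1 s = 0.
Proof.
  apply (linear_ode_zero Y1 (fun t => X1 t - 2 * X2 t + Bq 0 Lc X1 X2 t) b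
           (M1 + 2 * M2 + M1 ^ 2 + 2 * M2 ^ 2)); [ | | exact HY1_0].
  - intros t Ht. destruct (Hsys t Ht) as (_ & _ & _ & HY1 & _).
    eapply is_derive_eq_val; [exact HY1 | ring].
  - intros t Ht. unfold Bq.
    pose proof (proj1 (Rabs_le_between _ _) (HM1 t Ht)).
    pose proof (proj1 (Rabs_le_between _ _) (HM2 t Ht)). nra.
Qed.

Lemma X2_eq0 s : 0 < s < b -> X2 s = 0.
Proof.
  apply (linear_ode_zero X2 (fun t => Bq 0 Lc X1 X2 t - 1) b (M1 ^ 2 + 2 * M2 ^ 2));
    [ | | exact HX2_0].
  - intros t Ht. destruct (Hsys t Ht) as (_ & _ & HX2 & _).
    rewrite Y1_eq0 in HX2 by exact Ht.
    eapply is_derive_eq_val; [exact HX2 | field].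
  - intros t Ht. unfold Bq.
    pose proof (proj1 (Rabs_le_between _ _) (HM1 t Ht)).
    pose proof (proj1 (Rabs_le_between _ _) (HM2 t Ht)). nra.
Qed.

Lemma X1_eq_X1sol s : 0 < s < b -> X1 s = X1sol a s.
Proof.
  intros Hs. apply Rminus_diag_uniq. revert s Hs.
  apply (linear_ode_zero (fun t => X1 t - X1sol a t)
           (fun t => X1 t ^ 2 + X1 t * X1sol a t + X1sol a t ^ 2 - 1) b (2 * M1 ^ 2 + 1)).
  - intros t Ht. destruct (Hsys t Ht) as (_ & HX1 & _).
    unfold Bq in HX1. rewrite Y1_eq0, X2_eq0 in HX1 by exact Ht.
    eapply is_derive_eq_val; [apply is_derive_Rminus; [exact HX1 | apply is_derive_X1sol, Ha] |].
    field.
  - intros t Ht. pose proof (proj1 (Rabs_le_between _ _) (HM1 t Ht)).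
    pose proof (X1sol_sqr_lt_1 a Ha t). pose proof (pow2_ge_0 (X1 t - X1sol a t)). nra.
  - apply filterlim_Rminus with a (X1sol a 0); [exact HX1_0 | | rewrite X1sol_0; ring].
    eapply is_derive_filterlim_at_right, is_derive_X1sol, Ha.
Qed.

Lemma Lc_eq_Lsol s : 0 < s < b -> Lc s = Lsol a l0 s.
Proof.
  intros Hs. apply Rminus_diag_uniq. revert s Hs.
  apply (linear_ode_zero (fun t => Lc t - Lsol a l0 t) (fun t => X1sol a t ^ 2) b 1).
  - intros t Ht. destruct (Hsys t Ht) as (HLc & _).
    unfold Bq in HLc. rewrite X1_eq_X1sol, X2_eq0 in HLc by exact Ht.
    eapply is_derive_eq_val; [apply is_derive_Rminus; [exact HLc | apply is_derive_Lsol, Ha] |].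
    ring.
  - intros t _. left. apply X1sol_sqr_lt_1, Ha.
  - apply filterlim_Rminus with l0 (Lsol a l0 0); [exact HLc0 | | rewrite Lsol_0; ring].
    eapply is_derive_filterlim_at_right, is_derive_Lsol, Ha.
Qed.

Lemma Y2_eq_Y2sol s : 0 < s < b -> Y2 s = Y2sol a y0 s.
Proof.
  intros Hs. apply Rminus_diag_uniq. revert s Hs.
  apply (linear_ode_zero (fun t => Y2 t - Y2sol a y0 t) (fun t => X1sol a t ^ 2 - X1sol a t) b 2).
  - intros t Ht. destruct (Hsys t Ht) as (_ & _ & _ & _ & HY2).
    unfold Bq in HY2. rewrite X1_eq_X1sol, X2_eq0 in HY2 by exact Ht.
    eapply is_derive_eq_val; [apply is_derive_Rminus; [exact HY2 | apply is_derive_Y2sol, Ha] |].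
    ring.
  - intros t _. pose proof (X1sol_sqr_lt_1 a Ha t). nra.
  - apply filterlim_Rminus with y0 (Y2sol a y0 0); [exact HY2_0 | | rewrite (Y2sol_0 a Ha); ring].
    eapply is_derive_filterlim_at_right, is_derive_Y2sol, Ha.
Qed.

End ExplicitSolutionUnique.

Lemma Bsol_eq_explicit (a l0 y0 : R) (S : Rbar) (Lc X1 X2 Y1 Y2 : R -> R) :
  a ^ 2 < 1 -> Bsol_on 0 S Lc X1 X2 Y1 Y2 ->
  Lc 0 = l0 -> X1 0 = a -> X2 0 = 0 -> Y1 0 = 0 -> Y2 0 = y0 ->
  forall s, 0 <= s -> Rbar_lt s S ->
    Lc s = Lsol a l0 s /\ X1 s = X1sol a s /\ X2 s = 0 /\ Y1 s = 0 /\ Y2 s = Y2sol a y0 s.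
Proof.
  intros Ha (_ & Hsys & HLc0 & HX1_0 & HX2_0 & HY1_0 & HY2_0) HLc HX1 HX2 HY1 HY2 s Hs HsS.
  destruct (Req_dec s 0) as [-> | Hs0].
  { rewrite Lsol_0, X1sol_0, (Y2sol_0 _ Ha). auto. }
  assert (Hb : exists b, s < b /\ Rbar_lt b S).
  { destruct S as [S | |]; simpl in HsS |- *; [exists ((s + S) / 2) | exists (s + 1) | ]; lra. }
  destruct Hb as [b [Hsb HbS]].
  assert (Hsys_b : forall t, 0 < t <= b -> Bsys_at 0 Lc X1 X2 Y1 Y2 t).
  { intros t Ht. apply Hsys; [lra|]. apply Rbar_le_lt_trans with b; [simpl; lra | exact HbS]. }
  destruct (bounded_of_continuous_Ioc X1 b) as [M1 HM1]; [lra | | exact HX1_0 |].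
  { intros t Ht. destruct (Hsys_b t Ht) as (_ & HdX1 & _).
    apply (ex_derive_continuous X1). eexists. exact HdX1. }
  destruct (bounded_of_continuous_Ioc X2 b) as [M2 HM2]; [lra | | exact HX2_0 |].
  { intros t Ht. destruct (Hsys_b t Ht) as (_ & _ & HdX2 & _).
    apply (ex_derive_continuous X2). eexists. exact HdX2. }
  rewrite HLc in HLc0. rewrite HX1 in HX1_0. rewrite HX2 in HX2_0.
  rewrite HY1 in HY1_0. rewrite HY2 in HY2_0.
  assert (Hsys' : forall t, 0 < t < b -> Bsys_at 0 Lc X1 X2 Y1 Y2 t) by (intros; apply Hsys_b; lra).
  assert (Hsb' : 0 < s < b) by lra.
  split; [|split; [|split; [|split]]].
  - eapply Lc_eq_Lsol with (b := b); eauto.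
  - eapply X1_eq_X1sol with (b := b); eauto.
  - eapply X2_eq0 with (b := b); eauto.
  - eapply Y1_eq0 with (b := b); eauto.
  - eapply Y2_eq_Y2sol with (b := b); eauto.
Qed.

Theorem proposition4p1 (n : nat) (T : R) (xi L1 L2 R1 R2 : R -> R) :
  0 < T ->
  (* a solution of the r-system (lambda = 0) on (0, T] *)
  (forall r, 0 < r < T -> rsys_at 0 xi L1 L2 R1 R2 r) ->
  filterlim xi (at_left T) (locally (xi T)) ->
  filterlim L1 (at_left T) (locally (L1 T)) ->
  filterlim L2 (at_left T) (locally (L2 T)) ->
  filterlim R1 (at_left T) (locally (R1 T)) ->
  filterlim R2 (at_left T) (locally (R2 T)) ->
  (* phi takes values in (1, oo) x R^6 *)
  1 < xi T ->
  (* (alpha, beta) = (1, 0) *)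
  filterlim (fun r => (xi r - L1 r - 2 * L2 r) / r) (at_right 0) (locally 1) ->
  filterlim (fun r => R1 r / r) (at_right 0) (locally 0) ->
  (* beta = 0 gives R1 = 0 identically *)
  (forall r, 0 < r <= T -> R1 r = 0) ->
  (* regularity at the singular orbit (collapsing circle, f1 = 1/R2 > 0, f1 ~ r) *)
  filterlim (fun r => r * L1 r) (at_right 0) (locally 1) ->
  filterlim L2 (at_right 0) (locally 0) ->
  0 < R2 T ->
  exists Lc X1 X2 Y1 Y2 : R -> R,
    (* a solution of (B) starting at phi(1,0), defined for all s >= 0 *)
    Bsol_on 0 p_infty Lc X1 X2 Y1 Y2 /\
    B_init (xi T) (L1 T) (L2 T) (R1 T) (R2 T) Lc X1 X2 Y1 Y2 /\
    (* it is the maximal solution: every solution with the same data agrees *)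
    (forall (S : Rbar) (Lc' X1' X2' Y1' Y2' : R -> R),
        Bsol_on 0 S Lc' X1' X2' Y1' Y2' ->
        B_init (xi T) (L1 T) (L2 T) (R1 T) (R2 T) Lc' X1' X2' Y1' Y2' ->
        forall s, 0 <= s -> Rbar_lt s S ->
          Lc' s = Lc s /\ X1' s = X1 s /\ X2' s = X2 s /\
          Y1' s = Y1 s /\ Y2' s = Y2 s) /\
    (* limits as s -> oo *)
    (exists l, filterlim Lc (Rbar_locally p_infty) (locally l) /\ 0 < l) /\
    filterlim X1 (Rbar_locally p_infty) (locally 0) /\
    filterlim X2 (Rbar_locally p_infty) (locally 0) /\
    filterlim Y1 (Rbar_locally p_infty) (locally 0) /\
    (exists l, filterlim Y2 (Rbar_locally p_infty) (locally l) /\ 0 < l).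
Proof.
  intros HT Hsys Hxi HL1 HL2 _ _ Hxi1 Halpha _ HR1 HL1_0 HL2_0 HR2.
  assert (HR1' : forall r, 0 < r < T -> R1 r = 0) by (intros r Hr; apply HR1; lra).
  assert (Hxi0 : 0 < xi T) by lra.
  assert (HL2T : L2 T = 0) by (eapply L2_T_eq0; eauto).
  assert (Hxi_L1 : xi T ^ 2 - L1 T ^ 2 = 2) by (eapply xi_sqr_sub_L1_sqr_T; eauto).
  set (a := L1 T / xi T).
  assert (Ha : a ^ 2 < 1).
  { assert (a ^ 2 * xi T ^ 2 = L1 T ^ 2) by (unfold a; field; lra). nra. }
  exists (Lsol a (/ xi T)), (X1sol a), (fun _ => 0), (fun _ => 0), (Y2sol a (R2 T / xi T)).
  split; [apply Bsol_explicit, Ha |].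
  split.
  { unfold B_init. rewrite Lsol_0, X1sol_0, (Y2sol_0 _ Ha), HL2T, HR1 by lra.
    repeat split; unfold Rdiv; ring. }
  split.
  { intros S Lc X1 X2 Y1 Y2 HB (HLc & HX1 & HX2 & HY1 & HY2).
    rewrite HL2T, Rdiv_0_l in HX2. rewrite HR1, Rdiv_0_l in HY1 by lra.
    exact (Bsol_eq_explicit a _ _ S Lc X1 X2 Y1 Y2 Ha HB HLc HX1 HX2 HY1 HY2). }
  assert (Ha1 : 0 < 1 + a) by nra.
  repeat split; try apply filterlim_const.
  - exists (/ xi T / sqrt (1 - a ^ 2)). split; [apply Lsol_lim, Ha |].
    apply Rdiv_lt_0_compat; [apply Rinv_0_lt_compat | apply sqrt_lt_R0]; lra.
  - apply X1sol_lim, Ha.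
  - exists (R2 T / xi T / (1 + a)). split; [apply Y2sol_lim, Ha |].
    repeat apply Rdiv_lt_0_compat; lra.
Qed.
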